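(* Let $S$ be an inverse semigroup that is a mirror semigroup, with semilattice of idempotents $\Sigma=\Sigma(S)$. Then $(S,\leqslant)$ is continuous (resp. algebraic) if and only if $(\Sigma,\leqslant)$ is continuous (resp. algebraic).
   Context: An inverse semigroup is a semigroup $S$ in which every $s$ has a unique $s^*$ with $ss^*s=s$ and $s^*ss^*=s^*$. $\Sigma(S)$ is the set of idempotents. The intrinsic order is $s\leqslant t$ iff $s=t\epsilon$ for some idempotent $\epsilon$. A subset is directed if nonempty and any two elements have an upper bound in it. $S$ is a mirror semigroup if every directed subset of $\Sigma$ having a supremum in $(\Sigma,\leqslant)$ also has a supremum in $(S,\leqslant)$. In a poset, $x$ is way-below $y$ ($x\ll y$) if for every directed subset $D$ that has a supremum with $y\leqslant \sup D$, there is $d\in D$ with $x\leqslant d$. A poset is continuous if for every $s$ the set $\{t : t\ll s\}$ is directed with supremum $s$. An element $k$ is compact if $k\ll k$; a poset is algebraic if every element is the supremum of the directed set of compact elements below it. (The way-below relation, continuity and algebraicity of $\Sigma$ are taken with respect to the poset $(\Sigma,\leqslant)$ itself.) *)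

Definition inverse_semigroup {S : Type} (mul : S -> S -> S) : Prop :=
  (forall a b c, mul a (mul b c) = mul (mul a b) c) /\
  (forall s, exists! t, mul (mul s t) s = s /\ mul (mul t s) t = t).

Definition idempotent {S : Type} (mul : S -> S -> S) (e : S) : Prop :=
  mul e e = e.

Definition intrinsic_le {S : Type} (mul : S -> S -> S) (s t : S) : Prop :=
  exists e, idempotent mul e /\ s = mul t e.

(* Order-theoretic notions relative to a carrier C (the poset (C, le)). *)
Definition directed {S : Type} (C : S -> Prop) (le : S -> S -> Prop)
  (D : S -> Prop) : Prop :=
  (forall d, D d -> C d) /\ (exists d, D d) /\
  (forall a b, D a -> D b -> exists c, D c /\ le a c /\ le b c).

Definition is_sup {S : Type} (C : S -> Prop) (le : S -> S -> Prop)
  (D : S -> Prop) (x : S) : Prop :=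
  C x /\ (forall d, D d -> le d x) /\
  (forall y, C y -> (forall d, D d -> le d y) -> le x y).

Definition has_sup {S : Type} (C : S -> Prop) (le : S -> S -> Prop)
  (D : S -> Prop) : Prop := exists x, is_sup C le D x.

Definition way_below {S : Type} (C : S -> Prop) (le : S -> S -> Prop)
  (x y : S) : Prop :=
  forall D, directed C le D -> forall s, is_sup C le D s -> le y s ->
    exists d, D d /\ le x d.

Definition continuous_poset {S : Type} (C : S -> Prop) (le : S -> S -> Prop)
  : Prop :=
  forall s, C s ->
    directed C le (fun t => C t /\ way_below C le t s) /\
    is_sup C le (fun t => C t /\ way_below C le t s) s.

Definition compact {S : Type} (C : S -> Prop) (le : S -> S -> Prop) (k : S)
  : Prop := C k /\ way_below C le k k.

Definition algebraic_poset {S : Type} (C : S -> Prop) (le : S -> S -> Prop)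
  : Prop :=
  forall s, C s ->
    directed C le (fun k => compact C le k /\ le k s) /\
    is_sup C le (fun k => compact C le k /\ le k s) s.

Definition mirror {S : Type} (mul : S -> S -> S) : Prop :=
  forall D, directed (idempotent mul) (intrinsic_le mul) D ->
    has_sup (idempotent mul) (intrinsic_le mul) D ->
    has_sup (fun _ => True) (intrinsic_le mul) D.

From Stdlib Require Import IndefiniteDescription.

(* Write d(s) = s* s, so that s = s d(s).  If F is a directed set of
   idempotents with supremum d(s) in Sigma, then sF is directed with supremum
   s in S; the mirror property enters here, making d(s) the supremum of F in S
   as well.  Dually, f << d(u) in Sigma implies uf << u in S, and on
   idempotents the way-below relations of S and of Sigma coincide because
   Sigma is a down-set of S.  So s is the supremum of {sf | f << d(s)} (resp.
   of {sf | f compact, f <= d(s)}), whose members are way below s (resp.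
   compact), and continuity (resp. algebraicity) passes from Sigma to S; the
   converse is restriction to Sigma. *)

Section Posets.

Variables (T : Type) (le : T -> T -> Prop).

Lemma way_below_le (C : T -> Prop) x y :
  (forall z, le z z) -> C y -> way_below C le x y -> le x y.
Proof.
  intros le_refl Cy xy.
  destruct (xy (fun z => z = y)) with (s := y) as [d [-> xd]]; auto.
  - split; [intros d ->; exact Cy|split; [exists y; reflexivity|]].
    intros a b -> ->. exists y. auto.
  - split; [exact Cy|split; [intros d ->; apply le_refl|]].
    intros z _ yz. apply yz. reflexivity.
Qed.

Lemma directed_ext (C P Q : T -> Prop) :
  (forall t, P t <-> Q t) -> directed C le P -> directed C le Q.
Proof.
  intros PQ [PC [[p Pp] Pdir]]. split; [|split].
  - intros t Qt. apply PC, PQ, Qt.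
  - exists p. apply PQ, Pp.
  - intros a b Qa Qb. destruct (Pdir a b) as [c [Pc ub]]; try apply PQ; auto.
    exists c. split; [apply PQ|]; assumption.
Qed.

Lemma is_sup_ext (C P Q : T -> Prop) s :
  (forall t, P t <-> Q t) -> is_sup C le P s -> is_sup C le Q s.
Proof.
  intros PQ [Cs [ub least]]. split; [exact Cs|split].
  - intros t Qt. apply ub, PQ, Qt.
  - intros y Cy yub. apply least; [exact Cy|]. intros t Pt. apply yub, PQ, Pt.
Qed.

Lemma directed_carrier (C C' P : T -> Prop) :
  (forall t, P t -> C' t) -> directed C le P -> directed C' le P.
Proof. intros PC' [_ dir]. split; assumption. Qed.

Lemma is_sup_restrict (C C' P : T -> Prop) s :
  (forall t, C t -> C' t) -> C s -> is_sup C' le P s -> is_sup C le P s.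
Proof.
  intros CC' Cs [_ [ub least]]. split; [exact Cs|split; [exact ub|]].
  intros y Cy. apply least, CC', Cy.
Qed.

Lemma cofinal_directed_is_sup (C W P : T -> Prop) s :
  (forall a b c, le a b -> le b c -> le a c) ->
  (forall w, W w -> P w) -> (forall p, P p -> C p) ->
  (forall p, P p -> exists w, W w /\ le p w) ->
  directed C le W -> is_sup C le W s -> directed C le P /\ is_sup C le P s.
Proof.
  intros le_trans WP PC cofinal [_ [[w0 Ww0] Wdir]] [Cs [ub least]].
  split; [split; [exact PC|split]|split; [exact Cs|split]].
  - exists w0. auto.
  - intros a b Pa Pb.
    destruct (cofinal a Pa) as [wa [Wwa awa]], (cofinal b Pb) as [wb [Wwb bwb]].
    destruct (Wdir wa wb Wwa Wwb) as [c [Wc [wac wbc]]].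
    exists c. split; [auto|split; eauto].
  - intros p Pp. destruct (cofinal p Pp) as [w [Ww pw]]. eauto.
  - intros y Cy yub. apply least; auto.
Qed.

End Posets.

Section InverseSemigroup.

Variables (S : Type) (mul : S -> S -> S).
Hypothesis HS : inverse_semigroup mul.

Local Infix "*" := mul.
Local Notation "s <= t" := (intrinsic_le mul s t).

Lemma mulA a b c : a * (b * c) = a * b * c.
Proof. exact (proj1 HS a b c). Qed.

Ltac assoc := repeat rewrite mulA.

Definition is_inverse (s t : S) : Prop := s * t * s = s /\ t * s * t = t.

Definition inverse (s : S) : S :=
  proj1_sig (constructive_indefinite_description _ (proj2 HS s)).

Lemma inverse_is_inverse s : is_inverse s (inverse s).
Proof.
  unfold inverse. exact (proj1 (proj2_sig (constructive_indefinite_description _ (proj2 HS s)))).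
Qed.

Lemma inverse_unique s t : is_inverse s t -> inverse s = t.
Proof.
  unfold inverse. exact (proj2 (proj2_sig (constructive_indefinite_description _ (proj2 HS s))) t).
Qed.

Lemma mul_inverse_mul s : s * inverse s * s = s.
Proof. exact (proj1 (inverse_is_inverse s)). Qed.

Lemma inverse_mul_inverse s : inverse s * s * inverse s = inverse s.
Proof. exact (proj2 (inverse_is_inverse s)). Qed.

Lemma idempotent_is_inverse e : idempotent mul e -> is_inverse e e.
Proof. intro ee. unfold is_inverse. rewrite ee. split; exact ee. Qed.

Lemma inverse_idempotent e : idempotent mul e -> inverse e = e.
Proof. intro ee. apply inverse_unique, idempotent_is_inverse, ee. Qed.

Lemma mul_idempotentK a e : idempotent mul e -> a * e * e = a * e.
Proof. intro ee. rewrite <- mulA, ee. reflexivity. Qed.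

(* x := (ef)* coincides with the other inverse f x e of ef, which makes x
   idempotent; so ef, an inverse of x, equals x. *)
Lemma idempotent_mul e f :
  idempotent mul e -> idempotent mul f -> idempotent mul (e * f).
Proof.
  intros ee ff. destruct (inverse_is_inverse (e * f)) as [efx xef].
  set (x := inverse (e * f)) in *. assoc.
  assert (x_fxe : x = f * x * e).
  { apply inverse_unique. split; assoc.
    - rewrite (mul_idempotentK _ f ff), (mul_idempotentK _ e ee).
      rewrite mulA in efx. exact efx.
    - rewrite (mul_idempotentK _ e ee), (mul_idempotentK _ f ff).
      transitivity (f * (x * (e * f) * x) * e); [assoc; reflexivity|].
      rewrite xef. reflexivity. }
  assert (xx : idempotent mul x).
  { unfold idempotent. rewrite x_fxe at 2.
    transitivity (f * (x * (e * f) * x) * e); [|rewrite xef; symmetry; exact x_fxe].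
    rewrite x_fxe at 1. assoc. reflexivity. }
  assert (ef_x : e * f = x).
  { rewrite <- (inverse_idempotent x xx). symmetry. apply inverse_unique. split; assumption. }
  rewrite ef_x. exact xx.
Qed.

Lemma idempotent_comm e f :
  idempotent mul e -> idempotent mul f -> e * f = f * e.
Proof.
  intros ee ff.
  assert (efef := idempotent_mul e f ee ff). assert (fefe := idempotent_mul f e ff ee).
  unfold idempotent in efef, fefe. rewrite mulA in efef, fefe.
  transitivity (inverse (e * f)); [symmetry; apply inverse_idempotent, idempotent_mul; assumption|].
  apply inverse_unique. split; assoc.
  - rewrite (mul_idempotentK _ f ff), (mul_idempotentK _ e ee). exact efef.
  - rewrite (mul_idempotentK _ e ee), (mul_idempotentK _ f ff). exact fefe.
Qed.

Definition dom (s : S) : S := inverse s * s.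
Definition ran (s : S) : S := s * inverse s.

Lemma dom_idempotent s : idempotent mul (dom s).
Proof.
  unfold idempotent, dom. rewrite mulA, inverse_mul_inverse. reflexivity.
Qed.

Lemma ran_idempotent s : idempotent mul (ran s).
Proof.
  unfold idempotent, ran. rewrite mulA, mul_inverse_mul. reflexivity.
Qed.

Lemma mul_dom s : s * dom s = s.
Proof. unfold dom. rewrite mulA. apply mul_inverse_mul. Qed.

Lemma inverse_mul_idempotent x e :
  idempotent mul e -> inverse (x * e) = e * inverse x.
Proof.
  intro ee. assert (comm := idempotent_comm e (dom x) ee (dom_idempotent x)).
  apply inverse_unique. split.
  - transitivity (x * (e * dom x) * e);
      [unfold dom; assoc; rewrite (mul_idempotentK _ e ee); reflexivity|].
    rewrite comm. assoc. rewrite (mul_idempotentK _ e ee).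
    unfold dom. assoc. rewrite mul_inverse_mul. reflexivity.
  - transitivity (e * (dom x * e) * inverse x);
      [unfold dom; assoc; rewrite (mul_idempotentK _ e ee); reflexivity|].
    rewrite <- comm. unfold dom. assoc. rewrite ee.
    transitivity (e * (inverse x * x * inverse x)); [assoc; reflexivity|].
    rewrite inverse_mul_inverse. reflexivity.
Qed.

Lemma dom_mul_idempotent x e : idempotent mul e -> dom (x * e) = dom x * e.
Proof.
  intro ee. unfold dom at 1. rewrite inverse_mul_idempotent by exact ee.
  transitivity (e * dom x * e); [unfold dom; assoc; reflexivity|].
  rewrite (idempotent_comm e (dom x) ee (dom_idempotent x)). apply mul_idempotentK, ee.
Qed.

Lemma intrinsic_le_refl s : s <= s.
Proof. exists (dom s). split; [apply dom_idempotent|symmetry; apply mul_dom]. Qed.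

Lemma intrinsic_le_trans a b c : a <= b -> b <= c -> a <= c.
Proof.
  intros [e [ee ->]] [f [ff ->]]. exists (f * e).
  split; [apply idempotent_mul; assumption|apply eq_sym, mulA].
Qed.

Lemma mul_idempotent_le s e : idempotent mul e -> s * e <= s.
Proof. intro ee. exists e. split; [exact ee|reflexivity]. Qed.

Lemma idempotent_mul_le e s : idempotent mul e -> e * s <= s.
Proof.
  intro ee. assert (comm := idempotent_comm e (ran s) ee (ran_idempotent s)).
  exists (inverse s * e * s). split.
  - unfold idempotent.
    transitivity (inverse s * (e * ran s) * e * s); [unfold ran; assoc; reflexivity|].
    rewrite comm. unfold ran. assoc. rewrite inverse_mul_inverse, (mul_idempotentK _ e ee).
    reflexivity.
  - transitivity (ran s * e * s); [|unfold ran; assoc; reflexivity].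
    rewrite <- comm, <- mulA. unfold ran. rewrite mul_inverse_mul. reflexivity.
Qed.

Lemma le_mul2l c a b : a <= b -> c * a <= c * b.
Proof. intros [e [ee ->]]. exists e. split; [exact ee|apply mulA]. Qed.

Lemma le_idempotent u e : idempotent mul e -> u <= e -> idempotent mul u.
Proof. intros ee [f [ff ->]]. apply idempotent_mul; assumption. Qed.

Lemma le_mul_dom u x : u <= x -> u = x * dom u.
Proof. intros [e [ee ->]]. rewrite dom_mul_idempotent, mulA, mul_dom by exact ee. reflexivity. Qed.

Lemma dom_le u x : u <= x -> dom u <= dom x.
Proof.
  intros [e [ee ->]]. rewrite dom_mul_idempotent by exact ee. apply mul_idempotent_le, ee.
Qed.

Lemma idempotent_le_mul e f : idempotent mul f -> e <= f -> f * e = e.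
Proof. intros ff [g [gg ->]]. rewrite mulA, ff. reflexivity. Qed.

Local Notation Sigma := (idempotent mul).
Local Notation whole := (fun _ : S => True).

Lemma directed_dom_image (D : S -> Prop) :
  directed whole (intrinsic_le mul) D ->
  directed Sigma (intrinsic_le mul) (fun e => exists v, D v /\ e = dom v).
Proof.
  intros [_ [[v0 Dv0] Ddir]]. split; [|split].
  - intros e [v [_ ->]]. apply dom_idempotent.
  - exists (dom v0), v0. auto.
  - intros a b [va [Dva ->]] [vb [Dvb ->]].
    destruct (Ddir va vb Dva Dvb) as [c [Dc [vac vbc]]].
    exists (dom c). split; [exists c; auto|split; apply dom_le; assumption].
Qed.

Lemma is_sup_dom_image (D : S -> Prop) x :
  is_sup whole (intrinsic_le mul) D x ->
  is_sup Sigma (intrinsic_le mul) (fun e => exists v, D v /\ e = dom v) (dom x).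
Proof.
  intros [_ [ub least]]. split; [apply dom_idempotent|split].
  - intros e [v [Dv ->]]. apply dom_le, ub, Dv.
  - intros y yy yub.
    assert (x_xy : x <= x * y).
    { apply least; [exact I|]. intros v Dv.
      rewrite (le_mul_dom v x (ub v Dv)). apply le_mul2l, yub. exists v. auto. }
    apply (intrinsic_le_trans _ (dom (x * y))); [apply dom_le, x_xy|].
    rewrite dom_mul_idempotent by exact yy. apply idempotent_mul_le, dom_idempotent.
Qed.

Lemma way_below_mul_dom u f :
  way_below Sigma (intrinsic_le mul) f (dom u) ->
  way_below whole (intrinsic_le mul) (u * f) u.
Proof.
  intros f_dom D Ddir x xsup ux.
  destruct (f_dom _ (directed_dom_image D Ddir) _ (is_sup_dom_image D x xsup) (dom_le u x ux))
    as [e [[v [Dv ->]] f_domv]].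
  exists v. split; [exact Dv|].
  assert (uf_xf : u * f = x * f).
  { assert (f_le := way_below_le _ _ _ _ _ intrinsic_le_refl (dom_idempotent u) f_dom).
    rewrite (le_mul_dom u x ux), <- mulA, (idempotent_le_mul f (dom u)) by
      (apply dom_idempotent || exact f_le).
    reflexivity. }
  destruct xsup as [_ [ub _]].
  rewrite uf_xf, (le_mul_dom v x (ub v Dv)). apply le_mul2l, f_domv.
Qed.

Lemma directed_mul_image (F : S -> Prop) s :
  directed Sigma (intrinsic_le mul) F ->
  directed whole (intrinsic_le mul) (fun w => exists f, F f /\ w = s * f).
Proof.
  intros [_ [[f0 Ff0] Fdir]]. split; [auto|split].
  - exists (s * f0), f0. auto.
  - intros a b [fa [Ffa ->]] [fb [Ffb ->]].
    destruct (Fdir fa fb Ffa Ffb) as [c [Fc [fac fbc]]].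
    exists (s * c). split; [exists c; auto|split; apply le_mul2l; assumption].
Qed.

Lemma dom_idempotent_id e : idempotent mul e -> dom e = e.
Proof. intro ee. unfold dom. rewrite inverse_idempotent; exact ee. Qed.

Hypothesis Hm : mirror mul.

Lemma is_sup_idempotents (D : S -> Prop) y :
  directed Sigma (intrinsic_le mul) D -> is_sup Sigma (intrinsic_le mul) D y ->
  is_sup whole (intrinsic_le mul) D y.
Proof.
  intros Ddir ysup. destruct (Hm D Ddir (ex_intro _ y ysup)) as [x [_ [xub xleast]]].
  destruct ysup as [yy [yub yleast]].
  assert (xx : idempotent mul x) by exact (le_idempotent x y yy (xleast y I yub)).
  split; [exact I|split; [exact yub|]].
  intros z _ zub. exact (intrinsic_le_trans _ _ _ (yleast x xx xub) (xleast z I zub)).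
Qed.

Lemma is_sup_mul_image (F : S -> Prop) s :
  directed Sigma (intrinsic_le mul) F -> is_sup Sigma (intrinsic_le mul) F (dom s) ->
  is_sup whole (intrinsic_le mul) (fun w => exists f, F f /\ w = s * f) s.
Proof.
  intros Fdir Fsup. destruct (Fdir) as [FSigma _].
  split; [exact I|split].
  - intros w [f [Ff ->]]. apply mul_idempotent_le, FSigma, Ff.
  - intros z _ zub.
    assert (F_le : forall f, F f -> f <= inverse s * z).
    { intros f Ff. destruct (zub (s * f)) as [g [gg sf_zg]]; [exists f; auto|].
      exists g. split; [exact gg|].
      destruct Fsup as [_ [ub _]].
      rewrite <- (idempotent_le_mul f (dom s) (dom_idempotent s) (ub f Ff)).
      unfold dom. rewrite <- mulA, sf_zg. assoc. reflexivity. }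
    destruct (is_sup_idempotents F (dom s) Fdir Fsup) as [_ [_ least]].
    destruct (least (inverse s * z) I F_le) as [h [hh dom_s]].
    rewrite <- (mul_dom s), dom_s.
    apply (intrinsic_le_trans _ (ran s * z)); [|apply idempotent_mul_le, ran_idempotent].
    unfold ran. assoc. apply mul_idempotent_le, hh.
Qed.

Lemma way_below_idempotent e t :
  idempotent mul e ->
  (way_below whole (intrinsic_le mul) t e <->
   idempotent mul t /\ way_below Sigma (intrinsic_le mul) t e).
Proof.
  intro ee. split.
  - intro t_e.
    assert (tt : idempotent mul t)
      by exact (le_idempotent t e ee (way_below_le _ _ _ _ _ intrinsic_le_refl I t_e)).
    split; [exact tt|].
    intros D Ddir y ysup ey.
    apply (t_e D (directed_carrier _ _ _ _ _ (fun _ _ => I) Ddir) y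
                 (is_sup_idempotents D y Ddir ysup) ey).
  - intros [tt t_e].
    assert (te : t <= e) by exact (way_below_le _ _ _ _ _ intrinsic_le_refl ee t_e).
    rewrite <- (idempotent_le_mul t e ee te). apply way_below_mul_dom.
    rewrite dom_idempotent_id by exact ee. exact t_e.
Qed.

Lemma continuous_idempotents_of_continuous :
  continuous_poset whole (intrinsic_le mul) -> continuous_poset Sigma (intrinsic_le mul).
Proof.
  intros HC e ee. destruct (HC e I) as [Pdir Psup].
  assert (same : forall t, True /\ way_below whole (intrinsic_le mul) t e <->
                      Sigma t /\ way_below Sigma (intrinsic_le mul) t e).
  { intro t. pose proof (way_below_idempotent e t ee). tauto. }
  split.
  - apply (directed_carrier _ _ whole); [tauto|exact (directed_ext _ _ _ _ _ same Pdir)].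
  - apply (is_sup_restrict _ _ _ whole); [auto|exact ee|exact (is_sup_ext _ _ _ _ _ _ same Psup)].
Qed.

Lemma algebraic_idempotents_of_algebraic :
  algebraic_poset whole (intrinsic_le mul) -> algebraic_poset Sigma (intrinsic_le mul).
Proof.
  intros HA e ee. destruct (HA e I) as [Pdir Psup].
  assert (same : forall k, compact whole (intrinsic_le mul) k /\ k <= e <->
                      compact Sigma (intrinsic_le mul) k /\ k <= e).
  { intro k. split; intros [[Ck k_k] ke]; assert (kk := le_idempotent k e ee ke);
      pose proof (way_below_idempotent k k kk); unfold compact; tauto. }
  split.
  - apply (directed_carrier _ _ whole); [intros k [[kk _] _]; exact kk|].
    exact (directed_ext _ _ _ _ _ same Pdir).
  - apply (is_sup_restrict _ _ _ whole); [auto|exact ee|exact (is_sup_ext _ _ _ _ _ _ same Psup)].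
Qed.

Lemma continuous_of_continuous_idempotents :
  continuous_poset Sigma (intrinsic_le mul) -> continuous_poset whole (intrinsic_le mul).
Proof.
  intros HC s _. destruct (HC (dom s) (dom_idempotent s)) as [Fdir Fsup].
  apply (cofinal_directed_is_sup _ _ _ (fun w => exists f, (Sigma f /\
           way_below Sigma (intrinsic_le mul) f (dom s)) /\ w = s * f));
    [exact intrinsic_le_trans| |auto| |apply directed_mul_image, Fdir
    |apply is_sup_mul_image; assumption].
  - intros w [f [[_ f_dom] ->]]. split; [exact I|]. apply way_below_mul_dom, f_dom.
  - intros p [_ p_s].
    exact (p_s _ (directed_mul_image _ s Fdir) s (is_sup_mul_image _ s Fdir Fsup)
               (intrinsic_le_refl s)).
Qed.

Lemma algebraic_of_algebraic_idempotents :
  algebraic_poset Sigma (intrinsic_le mul) -> algebraic_poset whole (intrinsic_le mul).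
Proof.
  intros HA s _. destruct (HA (dom s) (dom_idempotent s)) as [Fdir Fsup].
  apply (cofinal_directed_is_sup _ _ _ (fun w => exists f, (compact Sigma
           (intrinsic_le mul) f /\ f <= dom s) /\ w = s * f));
    [exact intrinsic_le_trans| |auto| |apply directed_mul_image, Fdir
    |apply is_sup_mul_image; assumption].
  - intros w [f [[[ff f_f] f_s] ->]].
    split; [split; [exact I|]|apply mul_idempotent_le, ff].
    (* sf = (sf)f and d(sf) = f, so f << f in Sigma gives sf << sf. *)
    rewrite <- (mul_idempotentK s f ff) at 1. apply way_below_mul_dom.
    rewrite dom_mul_idempotent, (idempotent_le_mul f (dom s)) by
      (apply dom_idempotent || assumption).
    exact f_f.
  - intros p [[_ p_p] p_s].
    exact (p_p _ (directed_mul_image _ s Fdir) s (is_sup_mul_image _ s Fdir Fsup) p_s).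
Qed.

End InverseSemigroup.

Theorem theorem5p3 (S : Type) (mul : S -> S -> S)
  (HS : inverse_semigroup mul) (Hm : mirror mul) :
  (continuous_poset (fun _ : S => True) (intrinsic_le mul) <->
   continuous_poset (idempotent mul) (intrinsic_le mul)) /\
  (algebraic_poset (fun _ : S => True) (intrinsic_le mul) <->
   algebraic_poset (idempotent mul) (intrinsic_le mul)).
Proof.
  split; split.
  - exact (continuous_idempotents_of_continuous S mul HS Hm).
  - exact (continuous_of_continuous_idempotents S mul HS Hm).
  - exact (algebraic_idempotents_of_algebraic S mul HS Hm).
  - exact (algebraic_of_algebraic_idempotents S mul HS Hm).
Qed.
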